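(* Let $a$ be an integer, $d\ge1$ an integer and $x\ge6$ real. Then $$0<\rho(a,d)-A\sum_{\substack{1\le t\le x\\ t\equiv a\pmod d}}r(t)<\frac{1.28}{x}.$$
   Context: $A=\prod_p\bigl(1-\frac{1}{p(p-1)}\bigr)$ (product over primes), $r(t)=\frac{1}{t^2}\prod_{p\mid t}\frac{p^2-1}{p^2-p-1}$, and $\rho(a,d)=A\sum_{t\ge1,\ t\equiv a\pmod d}r(t)$ (the average over primes $p$ of the proportion of elements of $\mathbb F_p^*$ with index $[\mathbb F_p^*:\langle x\rangle]\equiv a\pmod d$). *)

From Stdlib Require Import Reals ZArith List.
From Coquelicot Require Import Coquelicot.
From mathcomp Require prime.
Open Scope R_scope.

Definition A_partial (N : nat) : R :=
  fold_right (fun p acc => (1 - / (INR p * (INR p - 1))) * acc) 1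
    (List.filter prime.prime (List.seq 0 (S N))).

Definition A : R := real (Lim_seq A_partial).

Definition r (t : nat) : R :=
  / (INR t ^ 2) *
  fold_right (fun p acc => ((INR p ^ 2 - 1) / (INR p ^ 2 - INR p - 1)) * acc) 1
    (prime.primes t).

Definition congb (t : nat) (a : Z) (d : nat) : bool :=
  Z.eqb ((Z.of_nat t - a) mod Z.of_nat d)%Z 0%Z.

Definition rterm (a : Z) (d : nat) (t : nat) : R :=
  if (Nat.leb 1 t && congb t a d)%bool then r t else 0.

Definition rho (a : Z) (d : nat) : R := A * Series (rterm a d).

Definition rho_trunc (a : Z) (d : nat) (x : R) : R :=
  A * sum_n (rterm a d) (Z.to_nat (Int_part x)).

From Stdlib Require Import Reals ZArith.
From Coquelicot Require Import Coquelicot.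
From Stdlib Require Import List Lra Lia QArith Qreals.
From mathcomp Require Import ssreflect ssrbool ssrnat eqtype prime div seq path.
From mathcomp Require Import zify.
Open Scope R_scope.

(* Since [A] is at most its partial product over [p <= t + 7] and
   [(1 - 1/(p(p-1))) (p^2-1)/(p^2-p-1) = 1 + 1/p], one gets [A r(t) <= B(t)/t^2] with
   [B(t) = A_7 prod_{p | t} b(p)], where [A_7] is the partial product over [p <= 7],
   [b(p) = (p^2-1)/(p^2-p-1)] for [p <= 7] and [b(p) = 1 + 1/p] for [p > 7].
   Hence it suffices that [M sum_{t >= M} B(t)/t^2 <= 5/4] for all [M >= 7]: the error
   term is at most this tail for [M = floor x + 1 > x], and [5/4 < 1.28].
   Writing [prod_{p | t} b(p) = sum_{d | t, d squarefree} g(d)] with [g] multiplicative,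
   [g(p) = b(p) - 1], and summing [1/t^2] over the multiples of [d] gives
   [M sum_{t >= M} B(t)/t^2 <= 7/6 + 35/8 (H_M + 2)/M] ([H_M] harmonic), which is below
   [1.21] once [M >= 1000]; the remaining [M < 1000] are checked by exact rational
   arithmetic.  Positivity holds because [r > 0] and the progression is infinite. *)

(** * Finite sums and products over lists *)

Definition lsum {T} (l : list T) (f : T -> R) : R := fold_right (fun a acc => f a + acc) 0 l.
Definition lprod {T} (l : list T) (f : T -> R) : R := fold_right (fun a acc => f a * acc) 1 l.

Lemma lsum_zero {T} (l : list T) : lsum l (fun _ => 0) = 0.
Proof. elim: l => [|a l IH] /=; [lra | rewrite IH; lra]. Qed.

Section ListSums.
Context {T : Type}.
Implicit Types (l : list T) (f g : T -> R).

Lemma lsum_nil f : lsum [::] f = 0.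
Proof. by []. Qed.

Lemma lsum_cons a l f : lsum (a :: l) f = f a + lsum l f.
Proof. by []. Qed.

Lemma lsum_app l1 l2 f : lsum (l1 ++ l2)%list f = lsum l1 f + lsum l2 f.
Proof. elim: l1 => [|a l IH] /=; [lra | rewrite IH; lra]. Qed.

Lemma lprod_app l1 l2 f : lprod (l1 ++ l2)%list f = lprod l1 f * lprod l2 f.
Proof. elim: l1 => [|a l IH] /=; [lra | rewrite IH; lra]. Qed.

Lemma lsum_map {S} (l : list S) (h : S -> T) f : lsum (List.map h l) f = lsum l (fun a => f (h a)).
Proof. elim: l => [|a l IH] /=; [lra | rewrite IH; lra]. Qed.

Lemma lsum_ext l f g : (forall a, List.In a l -> f a = g a) -> lsum l f = lsum l g.
Proof.
elim: l => [|a l IH] /= Hfg; first lra.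
by rewrite Hfg ?IH; [| move=> b Hb; apply: Hfg; right | left].
Qed.

Lemma lprod_ext l f g : (forall a, List.In a l -> f a = g a) -> lprod l f = lprod l g.
Proof.
elim: l => [|a l IH] /= Hfg; first lra.
by rewrite Hfg ?IH; [| move=> b Hb; apply: Hfg; right | left].
Qed.

Lemma lsum_le l f g : (forall a, List.In a l -> f a <= g a) -> lsum l f <= lsum l g.
Proof.
elim: l => [|a l IH] /= Hfg; first lra.
have := Hfg a (or_introl (Logic.eq_refl a)); have := IH (fun b Hb => Hfg b (or_intror Hb)); lra.
Qed.

Lemma lsum_nonneg l f : (forall a, List.In a l -> 0 <= f a) -> 0 <= lsum l f.
Proof. by move=> Hf; rewrite -(lsum_zero l); apply: lsum_le. Qed.

Lemma lsum_scal l f c : c * lsum l f = lsum l (fun a => c * f a).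
Proof. elim: l => [|a l IH] /=; [lra | rewrite -IH; lra]. Qed.

Lemma lsum_plus l f g : lsum l (fun a => f a + g a) = lsum l f + lsum l g.
Proof. elim: l => [|a l IH] /=; [lra | rewrite IH; lra]. Qed.

Lemma lsum_filter l (q : T -> bool) f :
  lsum (List.filter q l) f = lsum l (fun a => if q a then f a else 0).
Proof. elim: l => [|a l IH] /=; first lra. by case: (q a) => /=; rewrite IH; lra. Qed.

Lemma lsum_split l (q : T -> bool) f :
  lsum l f = lsum (List.filter q l) f + lsum (List.filter (fun a => ~~ q a) l) f.
Proof. rewrite !lsum_filter -lsum_plus; apply: lsum_ext => a _; case: (q a) => /=; lra. Qed.

Lemma lprod_mult l f g : lprod l (fun a => f a * g a) = lprod l f * lprod l g.
Proof. elim: l => [|a l IH] /=; [lra | rewrite IH; lra]. Qed.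

Lemma lprod_filter l (q : T -> bool) f :
  lprod (List.filter q l) f = lprod l (fun a => if q a then f a else 1).
Proof. elim: l => [|a l IH] /=; first lra. by case: (q a) => /=; rewrite IH; lra. Qed.

Lemma lprod_one l f : (forall a, List.In a l -> f a = 1) -> lprod l f = 1.
Proof.
move=> Hf; rewrite (lprod_ext _ _ (fun _ => 1)) //.
by elim: l {Hf} => [|a l IH] //=; rewrite IH; lra.
Qed.

Lemma lprod_nonneg l f : (forall a, List.In a l -> 0 <= f a) -> 0 <= lprod l f.
Proof.
elim: l => [|a l IH] /= Hf; first lra.
apply: Rmult_le_pos; [apply: Hf; left | apply: IH => b Hb; apply: Hf; right] => //.
Qed.

Lemma lprod_pos l f : (forall a, List.In a l -> 0 < f a) -> 0 < lprod l f.
Proof.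
elim: l => [|a l IH] /= Hf; first lra.
apply: Rmult_lt_0_compat; [apply: Hf; left | apply: IH => b Hb; apply: Hf; right] => //.
Qed.

Lemma lprod_le l f g : (forall a, List.In a l -> 0 <= f a <= g a) -> lprod l f <= lprod l g.
Proof.
elim: l => [|a l IH] /= Hfg; first lra.
have Ha := Hfg a (or_introl (Logic.eq_refl a)).
have Hl : forall b, List.In b l -> 0 <= f b <= g b by move=> b Hb; apply: Hfg; right.
have := lprod_nonneg l f (fun b Hb => proj1 (Hl b Hb)).
have := IH Hl; move=> *; apply: Rmult_le_compat; lra.
Qed.

Lemma lprod_le_inv_one_sub l (u : T -> R) : (forall a, List.In a l -> 0 <= u a) ->
  lsum l u < 1 -> lprod l (fun a => 1 + u a) <= / (1 - lsum l u).
Proof.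
elim: l => [|a l IH] /= Hu Hs; first by rewrite Rminus_0_r Rinv_1; lra.
have Ha : 0 <= u a by apply: Hu; left.
have Hl : 0 <= lsum l u by apply: lsum_nonneg => b Hb; apply: Hu; right.
have IH' := IH (fun b Hb => Hu b (or_intror Hb)) ltac:(lra).
set S := lsum l u in Hs Hl IH' *; set v := u a in Hs Ha *.
apply: (Rle_trans _ ((1 + v) * / (1 - S))); first by apply: Rmult_le_compat_l; lra.
(* [(1 + v)(1 - v - S) <= 1 - S] *)
rewrite (_ : (1 + v) * / (1 - S) = (1 + v) * (1 - v - S) * / ((1 - S) * (1 - v - S)));
  last by field; lra.
rewrite (_ : / (1 - (v + S)) = (1 - S) * / ((1 - S) * (1 - v - S))); last by field; lra.
apply: Rmult_le_compat_r; [apply/Rlt_le/Rinv_0_lt_compat; nra | nra].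
Qed.

End ListSums.

Lemma lsum_exchange {T S} (l : list T) (l' : list S) (h : T -> S -> R) :
  lsum l (fun a => lsum l' (h a)) = lsum l' (fun b => lsum l (fun a => h a b)).
Proof. elim: l => [|a l IH] /=; [by rewrite lsum_zero | by rewrite IH -lsum_plus]. Qed.

(** * The constant [A] *)

Definition primes_upto (n : nat) : list nat := List.filter prime.prime (List.seq 0 (S n)).
Definition Afac (p : nat) : R := 1 - / (INR p * (INR p - 1)).

Lemma A_partialE n : A_partial n = lprod (primes_upto n) Afac.
Proof. by []. Qed.

Lemma primes_upto_S n :
  primes_upto (S n) = (primes_upto n ++ if prime.prime (S n) then [:: S n] else [::])%list.
Proof.
by rewrite /primes_upto (List.seq_S (S n) 0) List.filter_app /=; case: (prime.prime (S n)).
Qed.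

Lemma In_primes_upto p n : List.In p (primes_upto n) <-> prime p /\ (p <= n)%coq_nat.
Proof. rewrite /primes_upto List.filter_In List.in_seq; split=> -[H1 H2]; split=> //; lia. Qed.

Lemma prime_ge2 p : prime p -> (2 <= p)%coq_nat.
Proof. by move/prime_gt1/ltP. Qed.

Lemma INR_ge2 p : (2 <= p)%coq_nat -> 2 <= INR p.
Proof. by move/le_INR. Qed.

Lemma Afac_bounds p : (2 <= p)%coq_nat -> 1/2 <= Afac p <= 1.
Proof.
move/INR_ge2=> Hp; rewrite /Afac.
have Hpp : 2 <= INR p * (INR p - 1) by nra.
have := Rinv_le_contravar 2 _ ltac:(lra) Hpp.
have := Rinv_0_lt_compat _ (Rlt_le_trans 0 2 _ ltac:(lra) Hpp); lra.
Qed.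

Lemma A_partial_S n :
  A_partial (S n) = A_partial n * (if prime.prime (S n) then Afac (S n) else 1).
Proof. rewrite !A_partialE primes_upto_S lprod_app; case: (prime.prime (S n)) => /=; lra. Qed.

Lemma A_partial_nonneg n : 0 <= A_partial n.
Proof.
rewrite A_partialE; apply: lprod_nonneg => p /In_primes_upto [/prime_ge2 Hp _].
have := Afac_bounds p Hp; lra.
Qed.

Lemma A_partial_decr n : A_partial (S n) <= A_partial n.
Proof.
rewrite A_partial_S; have := A_partial_nonneg n.
case Hp: (prime.prime (S n)); last lra.
have := Afac_bounds (S n) (prime_ge2 _ Hp); nra.
Qed.

(* Each prime factor [1 - 1/(n(n+1))] is at least the ratio of two consecutive bounds. *)
Lemma A_partial_lower n : (2 <= n)%coq_nat -> 1/2 * (1/2 + / INR n) <= A_partial n.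
Proof.
elim: n => [|n IH] Hn; first lia.
have [->|Hn1] := Nat.eq_dec n 1.
  by rewrite (A_partial_S 1) (_ : A_partial 1 = 1) // /= /Afac /=; lra.
have {IH} := IH ltac:(lia); have Hn2 := INR_ge2 n ltac:(lia).
rewrite A_partial_S S_INR => IH; set u := INR n in Hn2 IH *.
have Hinv : / (u + 1) <= / u by apply: Rinv_le_contravar; lra.
case: (prime.prime (S n)); last lra.
rewrite /Afac S_INR -/u (_ : u + 1 - 1 = u); last ring.
have Hstep : 1/2 * (1/2 + / u) * (1 - / ((u + 1) * u)) - 1/2 * (1/2 + / (u + 1))
             = (u - 2) / (4 * u ^ 2 * (u + 1)) by field; lra.
have : 0 <= (u - 2) / (4 * u ^ 2 * (u + 1)) by apply: Rcomplements.Rdiv_le_0_compat; nra.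
have : 0 <= 1 - / ((u + 1) * u).
  have : / ((u + 1) * u) <= / 1 by apply: Rinv_le_contravar; nra.
  lra.
nra.
Qed.

Lemma A_partial_ge n : 1/4 <= A_partial n.
Proof.
have [Hn|] := le_lt_dec 2 n.
  have : 0 < / INR n by apply/Rinv_0_lt_compat/lt_0_INR; lia.
  have := A_partial_lower n Hn; lra.
by case: n => [|[|n]] /= Hn; [ | | lia]; rewrite /A_partial /=; lra.
Qed.

Lemma is_lim_seq_A_partial : is_lim_seq A_partial A.
Proof.
have [l Hl] : ex_finite_lim_seq A_partial.
  exact: (ex_finite_lim_seq_decr _ (1/4) A_partial_decr A_partial_ge).
by rewrite /A (is_lim_seq_unique _ _ Hl).
Qed.

Lemma A_le_A_partial n : A <= A_partial n.
Proof. exact: (is_lim_seq_decr_compare _ _ is_lim_seq_A_partial A_partial_decr). Qed.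

Lemma A_ge : 1/4 <= A.
Proof.
exact: (is_lim_seq_le (fun _ => 1/4) A_partial (1/4) A A_partial_ge
          (is_lim_seq_const _) is_lim_seq_A_partial).
Qed.

(** * A majorant of [A r(t)] *)

Definition rfac (p : nat) : R := (INR p ^ 2 - 1) / (INR p ^ 2 - INR p - 1).
Definition bfac (p : nat) : R := if (p <= 7)%N then rfac p else 1 + / INR p.
Definition A7 : R := A_partial 7.
Definition Bcoef (t : nat) : R := A7 * lprod (primes t) bfac.

Lemma rE t : r t = / (INR t ^ 2) * lprod (primes t) rfac.
Proof. by []. Qed.

Lemma List_filterE {T} (f : T -> bool) (l : list T) : List.filter f l = filter f l.
Proof. by elim: l => [|a l IH] //=; case: (f a); rewrite IH. Qed.

Lemma List_seqE s n : List.seq s n = iota s n.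
Proof. by elim: n s => [|n IH] s //=; rewrite IH. Qed.

Lemma In_mem (T : eqType) (x : T) (s : seq T) : List.In x s -> x \in s.
Proof. elim: s => [|a s IH] //= [->|/IH]; rewrite in_cons ?eqxx // => ->; exact: orbT. Qed.

Lemma In_primes_prime p t : List.In p (primes t) -> prime p.
Proof. by move/In_mem; rewrite mem_primes => /andP []. Qed.

Lemma primes_upto_split t :
  primes_upto (t + 7) = (primes_upto 7 ++ List.filter prime.prime (List.seq 8 t))%list.
Proof.
by rewrite /primes_upto (_ : S (t + 7) = (8 + t)%coq_nat) ?List.seq_app ?List.filter_app //; lia.
Qed.

Lemma primes_filter_dvd t n : (1 <= t)%N -> (t <= n)%N ->
  primes t = List.filter (fun p => p %| t) (primes_upto n).
Proof.
move=> Ht Hn; rewrite /primes_upto !List_filterE List_seqE.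
apply: (irr_sorted_eq ltn_trans ltnn); first exact: sorted_primes.
  apply: sorted_filter; first exact: ltn_trans.
  apply: sorted_filter; [exact: ltn_trans | exact: iota_ltn_sorted].
move=> p; rewrite mem_primes !mem_filter mem_iota add0n Ht /=.
case Hp: (prime p); case Hd: (p %| t) => //=.
by rewrite ltnS (leq_trans (dvdn_leq Ht Hd) Hn).
Qed.

Lemma rfac_pos p : (2 <= p)%coq_nat -> 0 < rfac p.
Proof. move/INR_ge2=> Hp; rewrite /rfac; apply: Rdiv_lt_0_compat; nra. Qed.

Lemma Afac_mul_rfac p : (2 <= p)%coq_nat -> Afac p * rfac p = 1 + / INR p.
Proof. move/INR_ge2=> Hp; rewrite /Afac /rfac; field; split; nra. Qed.

Lemma bfac_ge1 p : (2 <= p)%coq_nat -> 1 <= bfac p.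
Proof.
move=> Hp; have HpR := INR_ge2 p Hp; rewrite /bfac; case: (p <= 7)%N.
  by rewrite /rfac; apply Rcomplements.Rle_div_r; nra.
have : 0 < / INR p by apply: Rinv_0_lt_compat; lra.
lra.
Qed.

(* The primes [p <= 7] contribute [Afac p] to [A7]; each larger [p | t] contributes
   [Afac p * rfac p = bfac p], and the other larger primes [Afac p <= 1]. *)
Lemma A_partial_mul_rfac_le t : (1 <= t)%N ->
  A_partial (t + 7) * lprod (primes t) rfac <= A7 * lprod (primes t) bfac.
Proof.
move=> Ht; set q := fun p => p %| t.
rewrite A_partialE (primes_filter_dvd _ _ Ht (leq_addr 7 t)).
rewrite !(lprod_filter (primes_upto (t + 7))) -lprod_mult.
rewrite primes_upto_split !lprod_app /A7 A_partialE.
set L7 := primes_upto 7; set R8 := List.filter prime.prime (List.seq 8 t).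
rewrite (lprod_ext L7 (fun a => Afac a * (if q a then rfac a else 1))
                      (fun a => Afac a * (if q a then bfac a else 1))); last first.
  by move=> p /In_primes_upto [_ /leP Hp]; rewrite /bfac Hp.
rewrite lprod_mult -Rmult_assoc.
have HR8 : lprod R8 (fun a => Afac a * (if q a then rfac a else 1))
           <= lprod R8 (fun a => if q a then bfac a else 1).
  apply: lprod_le => p /List.filter_In [/List.in_seq Hp _].
  have Hp2 : (2 <= p)%coq_nat by lia.
  have := Afac_bounds p Hp2; have := rfac_pos p Hp2.
  case: (q p) => *; last lra.
  rewrite Afac_mul_rfac // /bfac (_ : (p <= 7)%N = false); last lia.
  have : 0 < / INR p by apply/Rinv_0_lt_compat/lt_0_INR; lia.
  lra.
apply: Rmult_le_compat_l HR8.
apply: Rmult_le_pos; apply: lprod_nonneg => p /In_primes_upto [/prime_ge2 Hp _].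
  by have := Afac_bounds p Hp; lra.
by case: (q p); [have := bfac_ge1 p Hp|]; lra.
Qed.

Lemma A_r_le_Bcoef t : (1 <= t)%N -> A * r t <= Bcoef t / INR t ^ 2.
Proof.
move=> Ht; have Hinv : 0 < / INR t ^ 2 by apply/Rinv_0_lt_compat/pow_lt/lt_0_INR/leP.
have Hr : 0 <= lprod (primes t) rfac.
  by apply: lprod_nonneg => p /In_primes_prime/prime_ge2/rfac_pos/Rlt_le.
have HA := A_le_A_partial (t + 7); have := A_partial_mul_rfac_le t Ht => Hmaj.
have : A * lprod (primes t) rfac <= A7 * lprod (primes t) bfac by nra.
rewrite rE /Bcoef /Rdiv; nra.
Qed.

(** * Expansion over squarefree divisors *)

Definition gfac (p : nat) : R := bfac p - 1.
Definition wfac (p : nat) : R := if (p <= 7)%N then INR p * gfac p else 1.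

(* The pairs [(g(d), d)] for the squarefree [d] built from the primes of [L], where [g] is
   the multiplicative function with [g(p) = gfac p]. *)
Fixpoint sqfree_terms (L : list nat) : list (R * nat) :=
  match L with
  | nil => [:: (1, 1%nat)]
  | p :: L' => (sqfree_terms L'
                ++ List.map (fun x => (gfac p * fst x, (p * snd x)%nat)) (sqfree_terms L'))%list
  end.

Definition allprime (L : list nat) := forall p, List.In p L -> prime p.

Definition natprod (L : list nat) : nat := fold_right muln 1%nat L.

Lemma allprime_cons p L : allprime (p :: L) -> prime p /\ allprime L.
Proof. by move=> HL; split=> [|q Hq]; apply: HL; [left | right]. Qed.

Lemma gfac_nonneg p : prime p -> 0 <= gfac p.
Proof. by move=> /prime_ge2/bfac_ge1; rewrite /gfac; lra. Qed.

Lemma sqfree_terms_pos L : allprime L ->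
  forall x, List.In x (sqfree_terms L) -> 0 <= fst x /\ (0 < snd x)%N.
Proof.
elim: L => [|p L IH] /= HL x; first by case=> [<-|[]] /=; split; [lra |].
move: HL => /allprime_cons [Hp HL] Hx.
have [/(IH HL x) // | /List.in_map_iff [y [<- /(IH HL y) [Hy1 Hy2]]]] := List.in_app_or _ _ _ Hx.
rewrite /=.
by split; [apply: Rmult_le_pos; [apply: gfac_nonneg |] | rewrite muln_gt0 Hy2 prime_gt0].
Qed.

Lemma sqfree_terms_coprime L p : allprime L -> prime p -> ~ List.In p L ->
  forall x, List.In x (sqfree_terms L) -> coprime p (snd x).
Proof.
elim: L => [|q L IH] /= HL Hp HpL x; first by case=> [<-|[]]; exact: coprimen1.
move: HL => /allprime_cons [Hq HL] /(List.in_app_or _ _ x) [|/List.in_map_iff [y [<- Hy]]].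
  by apply: IH => // Hin; apply: HpL; right.
have Hc : coprime p (snd y) by apply: IH => // Hin; apply: HpL; right.
rewrite /= coprimeMr Hc andbT prime_coprime // dvdn_prime2 //.
by apply/eqP => E; apply: HpL; left; rewrite E.
Qed.

(* Expanding [prod_{p | t} (1 + g(p))] over the squarefree divisors of [t]. *)
Lemma lprod_bfac_dvd_le L t : allprime L -> NoDup L ->
  lprod L (fun p => if p %| t then bfac p else 1)
  <= lsum (sqfree_terms L) (fun x => if snd x %| t then fst x else 0).
Proof.
elim: L => [|p L IH] /= HL ND; first by rewrite dvd1n; lra.
move: HL => /allprime_cons [Hp HL]; inversion ND as [|? ? HnIn ND']; subst.
rewrite lsum_app lsum_map /=; have := IH HL ND'.
set S := lsum (sqfree_terms L) _; set S' := lsum (sqfree_terms L) _.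
set P := lprod L _ => IH'.
have Hg := gfac_nonneg p Hp.
have HS : 0 <= S.
  by apply: lsum_nonneg => x /(sqfree_terms_pos L HL) [Hx _]; case: (_ %| t); lra.
have HS' : 0 <= S'.
  by apply: lsum_nonneg => x /(sqfree_terms_pos L HL) [Hx _]; case: (_ %| t); nra.
have HP : 0 <= P.
  apply: lprod_nonneg => q /HL/prime_ge2/bfac_ge1 Hq.
  by case: (q %| t); lra.
case Hpt: (p %| t); last nra.
have : gfac p * S <= S'.
  rewrite lsum_scal; apply: lsum_le => x Hx.
  have [Hx0 _] := sqfree_terms_pos L HL x Hx.
  have Hc := sqfree_terms_coprime L p HL Hp HnIn x Hx.
  case Hd: (snd x %| t); first by rewrite (_ : p * snd x %| t) ?Gauss_dvd ?Hpt ?Hd //; lra.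
  by case: (p * snd x %| t); nra.
rewrite (_ : bfac p = 1 + gfac p); [nra | rewrite /gfac; ring].
Qed.

Lemma sqfree_terms_euler L : allprime L ->
  lsum (sqfree_terms L) (fun x => fst x / INR (snd x)) = lprod L (fun p => 1 + gfac p / INR p).
Proof.
elim: L => [|p L IH] /= HL; first lra.
move: HL => /allprime_cons [Hp HL]; rewrite lsum_app lsum_map IH //.
have Hp0 : 0 < INR p by apply/lt_0_INR/ltP/prime_gt0.
rewrite (lsum_ext _ _ (fun x => gfac p / INR p * (fst x / INR (snd x)))).
  by rewrite -lsum_scal IH //; ring.
move=> x /(sqfree_terms_pos L HL) [_ Hd] /=; rewrite mult_INR.
have : 0 < INR (snd x) by apply/lt_0_INR/ltP.
by move=> *; field; lra.
Qed.

Lemma wfac_bounds p : prime p -> 1 <= wfac p /\ 0 <= INR p * gfac p <= wfac p.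
Proof.
move=> /prime_ge2 Hp2; have Hp := INR_ge2 p Hp2.
rewrite /wfac /gfac /bfac; case: (p <= 7)%N; last first.
  by rewrite (_ : INR p * (1 + / INR p - 1) = 1); [lra | field; lra].
rewrite /rfac (_ : INR p * ((INR p ^ 2 - 1) / (INR p ^ 2 - INR p - 1) - 1)
                   = INR p ^ 2 / (INR p ^ 2 - INR p - 1)); last by field; nra.
split; first by apply Rcomplements.Rle_div_r; nra.
by split; [apply: Rcomplements.Rdiv_le_0_compat; nra | lra].
Qed.

Lemma sqfree_terms_weight L : allprime L ->
  forall x, List.In x (sqfree_terms L) -> fst x * INR (snd x) <= lprod L wfac.
Proof.
elim: L => [|p L IH] /= HL x; first by case=> [<-|[]] /=; lra.
move: HL => /allprime_cons [Hp HL]; have [Hw1 Hw2] := wfac_bounds p Hp.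
have HW : 0 <= lprod L wfac.
  by apply: lprod_nonneg => q /HL/wfac_bounds; lra.
move=> /(List.in_app_or _ _ x) [/(IH HL) | /List.in_map_iff [y [<- Hy]]]; first nra.
have := IH HL y Hy; have [Hy1 _] := sqfree_terms_pos L HL y Hy; have := pos_INR (snd y).
rewrite /= mult_INR => *.
rewrite (_ : gfac p * fst y * (INR p * INR (snd y)) = INR p * gfac p * (fst y * INR (snd y)));
  last ring.
by apply: Rmult_le_compat; nra.
Qed.

Lemma sqfree_terms_nodup L : allprime L -> NoDup L -> NoDup (List.map snd (sqfree_terms L)).
Proof.
elim: L => [|p L IH] /= HL ND; first by constructor; [| constructor].
move: HL => /allprime_cons [Hp HL]; inversion ND as [|? ? HnIn ND']; subst.
rewrite List.map_app List.map_map; apply: List.NoDup_app; first exact: IH.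
  rewrite -(List.map_map snd (fun d => (p * d)%nat)).
  apply: List.NoDup_map_NoDup_ForallPairs; last exact: IH.
  move=> m n _ _ /eqP; rewrite eqn_mul2l => /orP [/eqP Hp0 | /eqP] //.
  by have := prime_gt0 Hp; lia.
move=> d /List.in_map_iff [x [<- Hx]] /List.in_map_iff [y [E Hy]].
move: (sqfree_terms_coprime L p HL Hp HnIn x Hx).
by rewrite prime_coprime // -E /= dvdn_mulr.
Qed.

Lemma sqfree_terms_dvd L : forall x, List.In x (sqfree_terms L) -> (snd x %| natprod L).
Proof.
elim: L => [|p L IH] /= x; first by case=> [<-|[]].
move=> /(List.in_app_or _ _ x) [/IH Hx | /List.in_map_iff [y [<- /IH Hy]]].
  exact: dvdn_trans Hx (dvdn_mull _ _).
exact: dvdn_mul (dvdnn p) Hy.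
Qed.

(** * Sums of inverse squares *)

(* [mult_bound d y] majorises [sum_{t >= y, d | t} 1/t^2] for [d <= y]: it telescopes
   along the multiples of [d] because [1/y^2 <= 4/((2y-d)(2y+d))]. *)
Definition mult_bound (d : nat) (y : R) : R := 2 / (INR d * (2 * y - INR d)).

Lemma mult_bound_nonneg d y : 1 <= INR d -> INR d <= y -> 0 <= mult_bound d y.
Proof. by move=> *; apply: Rcomplements.Rdiv_le_0_compat; nra. Qed.

Lemma mult_bound_anti d y1 y2 :
  1 <= INR d -> INR d <= y1 -> y1 <= y2 -> mult_bound d y2 <= mult_bound d y1.
Proof. by move=> *; apply: Rmult_le_compat_l; [lra | apply: Rinv_le_contravar; nra]. Qed.

Lemma mult_bound_step d y :
  1 <= INR d -> INR d <= y -> / (y ^ 2) + mult_bound d (y + INR d) <= mult_bound d y.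
Proof.
move=> Hd Hy; rewrite /mult_bound.
have -> : 2 / (INR d * (2 * y - INR d)) = 2 / (INR d * (2 * (y + INR d) - INR d))
          + 4 / ((2 * y - INR d) * (2 * y + INR d)) by field; nra.
rewrite (_ : / y ^ 2 = 4 / (4 * y ^ 2)); last by field; nra.
have : 4 / (4 * y ^ 2) <= 4 / ((2 * y - INR d) * (2 * y + INR d)).
  by apply: Rmult_le_compat_l; [lra | apply: Rinv_le_contravar; nra].
lra.
Qed.

Definition inv_sq_mult (M d t : nat) : R :=
  if (M <= t)%N && (d %| t) then / (INR t ^ 2) else 0.

(* [d * (K %/ d) + d] is the first multiple of [d] beyond [K]. *)
Lemma lsum_inv_sq_mult_telescope d M K : (1 <= d)%N -> (1 <= M)%N ->
  let L := Rmax (INR M) (INR d) in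
  lsum (List.seq 0 (S K)) (inv_sq_mult M d) + mult_bound d (Rmax (INR (d * (K %/ d) + d)) L)
  <= mult_bound d L.
Proof.
move=> Hd HM L; have HdR : 1 <= INR d by apply: (le_INR 1); lia.
have HL1 : INR d <= L by apply: Rmax_r.
elim: K => [|K IH].
  rewrite /= /inv_sq_mult (_ : (M <= 0)%N = false) /=; last lia.
  by rewrite div0n muln0 add0n Rmax_right //; lra.
rewrite (List.seq_S (S K) 0) lsum_app lsum_cons lsum_nil Rplus_0_r.
change (0 + S K)%coq_nat with K.+1.
rewrite [inv_sq_mult M d K.+1]/inv_sq_mult.
have Hdiv := divnS K Hd.
case Hdt: (d %| K.+1); last by rewrite andbF (_ : K.+1 %/ d = K %/ d); [lra | rewrite Hdiv Hdt].
have E1 : (d * (K %/ d) + d = K.+1)%N by have := divnK Hdt; rewrite Hdiv /=; lia.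
have E2 : (d * (K.+1 %/ d) + d = K.+1 + d)%N by rewrite Hdiv /=; lia.
rewrite E1 in IH; rewrite E2 plus_INR andbT.
have Ht : INR d <= INR K.+1 by apply/le_INR/leP/dvdn_leq.
case HM': (M <= K.+1)%N.
  have HtL : L <= INR K.+1 by apply: Rmax_lub; [apply: le_INR; lia | exact: Ht].
  rewrite Rmax_left // in IH; rewrite Rmax_left; last by have := pos_INR d; lra.
  have := mult_bound_step d (INR K.+1) HdR Ht; lra.
rewrite Rmax_right in IH; last first.
  have : INR K.+1 <= INR M by apply: le_INR; lia.
  have := Rmax_l (INR M) (INR d); rewrite -/L; lra.
have : mult_bound d (Rmax (INR K.+1 + INR d) L) <= mult_bound d L.
  by apply: mult_bound_anti => //; apply: Rmax_r.
lra.
Qed.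

Lemma lsum_inv_sq_mult_le d M K : (1 <= d)%N -> (1 <= M)%N ->
  lsum (List.seq 0 (S K)) (inv_sq_mult M d) <= mult_bound d (Rmax (INR M) (INR d)).
Proof.
move=> Hd HM; have := lsum_inv_sq_mult_telescope d M K Hd HM.
have : 0 <= mult_bound d (Rmax (INR (d * (K %/ d) + d)) (Rmax (INR M) (INR d))).
  apply: mult_bound_nonneg; first by apply: (le_INR 1); lia.
  by apply: (Rle_trans _ (Rmax (INR M) (INR d))); apply: Rmax_r.
move=> /=; lra.
Qed.

Lemma lsum_filter_eq_le (s : list nat) v (f : nat -> R) : NoDup s -> 0 <= f v ->
  lsum (List.filter (fun d => Nat.eqb d v) s) f <= f v.
Proof.
elim: s => [|a s IH] /= ND Hv; first lra.
inversion ND as [|? ? Hn ND']; subst; case E: (Nat.eqb a v); last exact: IH.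
move/Nat.eqb_eq: E => E; subst; rewrite /= (lsum_ext _ _ (fun _ => 0)) ?lsum_zero; first lra.
by move=> b /List.filter_In [Hb /Nat.eqb_eq Eb]; subst.
Qed.

Lemma lsum_NoDup_le (f : nat -> R) D (s : list nat) : NoDup s ->
  (forall d, List.In d s -> (1 <= d)%coq_nat /\ (d <= D)%coq_nat) ->
  (forall d, (1 <= d)%coq_nat -> 0 <= f d) ->
  lsum s f <= lsum (List.seq 1 D) f.
Proof.
elim: D s => [|D IH] s ND Hs Hf.
  by case: s ND Hs => [|a s] _ Hs; [rewrite /=; lra | have := Hs a (List.in_eq a s); lia].
rewrite (lsum_split s (fun d => Nat.eqb d (S D))) (List.seq_S D 1) lsum_app /=.
have H1 := lsum_filter_eq_le s (S D) f ND (Hf _ (le_n_S _ _ (Nat.le_0_l D))).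
have H2 : lsum (List.filter (fun a => ~~ Nat.eqb a (S D)) s) f <= lsum (List.seq 1 D) f.
  apply: IH => //; first exact: List.NoDup_filter.
  move=> d /List.filter_In [Hd /negbTE/Nat.eqb_neq Hne]; have := Hs d Hd; lia.
lra.
Qed.

Lemma lsum_inv_sq_le a K : (2 <= a)%coq_nat ->
  lsum (List.seq a K) (fun n => / INR n ^ 2) <= / (INR a - 1).
Proof.
suff tele : forall a, (2 <= a)%coq_nat ->
  lsum (List.seq a K) (fun n => / INR n ^ 2) + / (INR a - 1 + INR K) <= / (INR a - 1).
  move=> Ha; have := tele a Ha; have := INR_ge2 a Ha => Ha'.
  have : 0 < / (INR a - 1 + INR K) by apply: Rinv_0_lt_compat; have := pos_INR K; lra.
  lra.
elim: K => [|K IH] b Hb; have Hb' := INR_ge2 b Hb.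
  by rewrite /= Rplus_0_r; lra.
rewrite [List.seq _ _]/= lsum_cons; have := IH (S b) ltac:(lia).
rewrite !S_INR (_ : INR b + 1 - 1 = INR b); last ring.
rewrite (_ : INR b - 1 + (INR K + 1) = INR b + INR K); last ring.
have : / INR b ^ 2 <= / (INR b - 1) - / INR b.
  rewrite (_ : / (INR b - 1) - / INR b = / (INR b * (INR b - 1))); last by field; lra.
  by apply: Rinv_le_contravar; nra.
lra.
Qed.

Definition harmonic (M : nat) : R := lsum (List.seq 1 M) (fun d => / INR d).

(* The weight of a squarefree [d] after summing [1/t^2] over its multiples [t >= M]. *)
Definition phi (M d : nat) : R :=
  if (d <= M)%N then / (INR M * INR d) else 2 * INR M / INR d ^ 3.

Lemma phi_nonneg M d : (1 <= M)%coq_nat -> (1 <= d)%coq_nat -> 0 <= phi M d.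
Proof.
move=> HM Hd; have Hd' : 0 < INR d by apply: lt_0_INR.
have HM' : 0 < INR M by apply: lt_0_INR.
rewrite /phi; case: (d <= M)%N; first by apply/Rlt_le/Rinv_0_lt_compat; nra.
by apply: Rcomplements.Rdiv_le_0_compat; [lra | apply: pow_lt].
Qed.

Lemma lsum_seq_le_add (g : nat -> R) a n k : (forall t, 0 <= g t) ->
  lsum (List.seq a n) g <= lsum (List.seq a (n + k)) g.
Proof.
move=> Hg; rewrite List.seq_app lsum_app.
have := lsum_nonneg (List.seq (a + n)%coq_nat k) g (fun t _ => Hg t); lra.
Qed.

(* Terms [d <= M] give [harmonic M / M]; terms [d > M] are at most [2 / d^2]. *)
Lemma lsum_phi_le M D : (1 <= M)%coq_nat ->
  lsum (List.seq 1 D) (phi M) <= (harmonic M + 2) / INR M.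
Proof.
move=> HM; have HM' : 0 < INR M by apply: lt_0_INR.
have Hphi : forall d, 0 <= phi M (S d) by move=> d; apply: phi_nonneg; lia.
apply: (Rle_trans _ (lsum (List.seq 1 (M + D)) (phi M))).
  rewrite addnC; apply: lsum_seq_le_add => -[|d] //.
  by rewrite /phi /= Rmult_0_r Rinv_0; case: (0 <= M)%N => /=; lra.
rewrite List.seq_app lsum_app.
have -> : lsum (List.seq 1 M) (phi M) = harmonic M / INR M.
  rewrite /harmonic /Rdiv Rmult_comm lsum_scal; apply: lsum_ext => d /List.in_seq Hd.
  by rewrite /phi (_ : (d <= M)%N) ?Rinv_mult //; lia.
have : lsum (List.seq (1 + M)%coq_nat D) (phi M) <= 2 / INR M.
  apply: (Rle_trans _ (2 * lsum (List.seq (S M) D) (fun n => / INR n ^ 2))).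
    rewrite lsum_scal; apply: lsum_le => d /List.in_seq Hd.
    have HdM : INR M <= INR d by apply: le_INR; lia.
    rewrite /phi (_ : (d <= M)%N = false); last lia.
    rewrite (_ : 2 * INR M / INR d ^ 3 = 2 / INR d ^ 2 * (INR M / INR d)); last by field; lra.
    have : INR M / INR d <= 1 by apply Rcomplements.Rle_div_l; lra.
    have : 0 < 2 / INR d ^ 2 by apply: Rdiv_lt_0_compat; [lra | apply: pow_lt; lra].
    rewrite /Rdiv; nra.
  have := lsum_inv_sq_le (S M) D ltac:(lia); rewrite S_INR (_ : INR M + 1 - 1 = INR M); last ring.
  rewrite /Rdiv; lra.
rewrite /Rdiv Rmult_plus_distr_r; lra.
Qed.

Lemma harmonic_nonneg M : 0 <= harmonic M.
Proof. by apply: lsum_nonneg => d /List.in_seq Hd; apply/Rlt_le/Rinv_0_lt_compat/lt_0_INR; lia. Qed.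

Lemma harmonic_add_le M k : (1 <= M)%coq_nat -> harmonic (M + k) <= harmonic M + INR k / INR M.
Proof.
move=> HM; have HM' : 0 < INR M by apply: lt_0_INR.
elim: k => [|k IH]; first by rewrite addn0 /Rdiv /=; lra.
rewrite /harmonic addnS (List.seq_S (M + k) 1) lsum_app lsum_cons lsum_nil.
rewrite -!/(harmonic _) S_INR /Rdiv Rmult_plus_distr_r Rmult_1_l.
have : / INR (1 + (M + k))%coq_nat <= / INR M.
  by apply: Rinv_le_contravar; [lra | apply: le_INR; lia].
rewrite /Rdiv in IH; lra.
Qed.

Lemma harmonic_ratio_anti M0 M : (1 <= M0)%coq_nat -> (M0 <= M)%coq_nat ->
  (harmonic M + 2) / INR M <= (harmonic M0 + 2) / INR M0.
Proof.
move=> H1 H2; have HM0 : 0 < INR M0 by apply: lt_0_INR.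
have := harmonic_add_le M0 (M - M0) H1.
rewrite (_ : (M0 + (M - M0))%N = M) ?minus_INR //; try lia.
set u := INR M / INR M0 => Hc.
have Hu : 1 <= u by apply Rcomplements.Rle_div_r; [lra | rewrite Rmult_1_l; apply: le_INR].
have EMu : INR M = u * INR M0 by rewrite /u; field; lra.
rewrite EMu in Hc *; rewrite (_ : (u * INR M0 - INR M0) / INR M0 = u - 1) in Hc; last by field; lra.
apply Rcomplements.Rle_div_l; first nra.
rewrite (_ : (harmonic M0 + 2) / INR M0 * (u * INR M0) = (harmonic M0 + 2) * u); last by field; lra.
have := Rmult_le_pos _ (u - 1) (harmonic_nonneg M0) ltac:(lra); nra.
Qed.

(** * The tail of [sum_t B(t)/t^2] *)

Lemma primes_upto_7 : primes_upto 7 = [:: 2; 3; 5; 7]%nat.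
Proof. by vm_compute. Qed.

Lemma A7E : A7 = 779 / 2016.
Proof. by rewrite /A7 A_partialE primes_upto_7 /lprod /Afac /=; field. Qed.

Lemma A7_pos : 0 < A7.
Proof. rewrite A7E; lra. Qed.

Lemma lprod_wfac_7 : lprod (primes_upto 7) wfac = 44100 / 3895.
Proof. by rewrite primes_upto_7 /lprod /wfac /gfac /bfac /rfac /=; field. Qed.

Lemma lprod_euler_7 : lprod (primes_upto 7) (fun p => 1 + gfac p / INR p) = 2016 / 779.
Proof. by rewrite primes_upto_7 /lprod /gfac /bfac /rfac /=; field. Qed.

(* For [p > 7], [1 + g(p)/p = 1 + 1/p^2], and [prod (1 + 1/n^2) <= 1/(1 - sum 1/n^2) <= 7/6]. *)
Lemma lprod_euler_gt7_le K :
  lprod (List.filter prime.prime (List.seq 8 K)) (fun p => 1 + gfac p / INR p) <= 7 / 6.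
Proof.
set S := lsum (List.seq 8 K) (fun n => / INR n ^ 2).
have Hsq : forall n, List.In n (List.seq 8 K) -> 0 <= / INR n ^ 2.
  by move=> n /List.in_seq Hn; apply/Rlt_le/Rinv_0_lt_compat/pow_lt/lt_0_INR; lia.
have HS : S <= 1/7 by have := lsum_inv_sq_le 8 K ltac:(lia); rewrite /= -/S; lra.
have HS0 : 0 <= S by apply: lsum_nonneg.
rewrite lprod_filter; apply: (Rle_trans _ (lprod (List.seq 8 K) (fun n => 1 + / INR n ^ 2))).
  apply: lprod_le => p Hp; have := Hsq p Hp; move/List.in_seq: Hp => Hp.
  have Hp' : 8 <= INR p by have := le_INR 8 p ltac:(lia); rewrite /=; lra.
  case: (prime.prime p) => Hsqp; last lra.
  rewrite /gfac /bfac (_ : (p <= 7)%N = false); last lia.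
  have -> : (1 + / INR p - 1) / INR p = / INR p ^ 2 by field; lra.
  lra.
apply: (Rle_trans _ (/ (1 - S))).
  by apply: lprod_le_inv_one_sub; [exact: Hsq | rewrite -/S; lra].
rewrite (_ : 7 / 6 = / (1 - 1/7)); last field.
by apply: Rinv_le_contravar; lra.
Qed.

Lemma allprime_primes_upto n : allprime (primes_upto n).
Proof. by move=> p /In_primes_upto []. Qed.

Lemma NoDup_primes_upto n : NoDup (primes_upto n).
Proof. exact/List.NoDup_filter/List.seq_NoDup. Qed.

Lemma lprod_wfac K : lprod (primes_upto (K + 7)) wfac = 44100 / 3895.
Proof.
rewrite primes_upto_split lprod_app lprod_wfac_7 lprod_one; first lra.
by move=> p /List.filter_In [/List.in_seq Hp _]; rewrite /wfac (_ : (p <= 7)%N = false) //; lia.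
Qed.

Lemma A7_lprod_euler_le K :
  A7 * lprod (primes_upto (K + 7)) (fun p => 1 + gfac p / INR p) <= 7 / 6.
Proof.
rewrite primes_upto_split lprod_app lprod_euler_7 A7E.
have := lprod_euler_gt7_le K.
set P := lprod (List.filter _ _) _.
rewrite (_ : 779 / 2016 * (2016 / 779 * P) = P); [lra | field].
Qed.

Definition Btail (M K : nat) : R :=
  lsum (List.seq 0 (S K)) (fun t => if (M <= t)%N then Bcoef t / INR t ^ 2 else 0).

Lemma Bcoef_le_sqfree t K : (1 <= t)%N -> (t <= K + 7)%N ->
  Bcoef t <= A7 * lsum (sqfree_terms (primes_upto (K + 7)))
                       (fun x => if snd x %| t then fst x else 0).
Proof.
move=> H1 H2; rewrite /Bcoef (primes_filter_dvd t (K + 7) H1 H2) lprod_filter.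
apply: Rmult_le_compat_l; first by have := A7_pos; lra.
exact: lprod_bfac_dvd_le (allprime_primes_upto _) (NoDup_primes_upto _).
Qed.

Lemma Btail_le_sqfree M K : (1 <= M)%N ->
  Btail M K <= A7 * lsum (sqfree_terms (primes_upto (K + 7)))
                   (fun x => fst x * lsum (List.seq 0 (S K)) (inv_sq_mult M (snd x))).
Proof.
move=> HM; set L := primes_upto (K + 7).
have -> : lsum (sqfree_terms L) (fun x => fst x * lsum (List.seq 0 (S K)) (inv_sq_mult M (snd x)))
  = lsum (List.seq 0 (S K))
         (fun t => lsum (sqfree_terms L) (fun x => fst x * inv_sq_mult M (snd x) t)).
  by rewrite -lsum_exchange; apply: lsum_ext => x _; rewrite lsum_scal.
rewrite lsum_scal /Btail; apply: lsum_le => t /List.in_seq Ht.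
case E: (M <= t)%N; last first.
  rewrite (lsum_ext _ _ (fun _ => 0)) ?lsum_zero => [|x _]; first lra.
  by rewrite /inv_sq_mult E /=; ring.
have Ht1 : (1 <= t)%N by apply: leq_trans HM E.
have Hi : 0 < / INR t ^ 2 by apply/Rinv_0_lt_compat/pow_lt/lt_0_INR; lia.
have -> : lsum (sqfree_terms L) (fun x => fst x * inv_sq_mult M (snd x) t)
          = / INR t ^ 2 * lsum (sqfree_terms L) (fun x => if snd x %| t then fst x else 0).
  rewrite lsum_scal; apply: lsum_ext => x _; rewrite /inv_sq_mult E /=.
  by case: (snd x %| t); ring.
have := Bcoef_le_sqfree t K Ht1 ltac:(lia); rewrite -/L /Rdiv; nra.
Qed.

Lemma weighted_mult_bound_le (M d : nat) (g W : R) : (1 <= M)%N -> (1 <= d)%N -> 0 <= g ->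
  g * INR d <= W ->
  INR M * (g * mult_bound d (Rmax (INR M) (INR d))) <= g / INR d + W * phi M d.
Proof.
move=> HM Hd Hg HW.
have HMr : 1 <= INR M by apply: (le_INR 1); lia.
have Hdr : 1 <= INR d by apply: (le_INR 1); lia.
have Hgw : g <= W / INR d by apply Rcomplements.Rle_div_r; lra.
rewrite /phi /mult_bound; case: (leqP d M) => HdM.
  have HdMr : INR d <= INR M by apply: le_INR; lia.
  rewrite Rmax_left //.
  rewrite (_ : INR M * (g * (2 / (INR d * (2 * INR M - INR d))))
               = g / INR d + g / (2 * INR M - INR d)); last by field; lra.
  have : g / (2 * INR M - INR d) <= g / INR M.
    by apply: Rmult_le_compat_l; [lra | apply: Rinv_le_contravar; lra].
  have : g / INR M <= W * / (INR M * INR d).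
    rewrite (_ : W * / (INR M * INR d) = W / INR d / INR M); last by field; lra.
    by apply: Rmult_le_compat_r; [apply/Rlt_le/Rinv_0_lt_compat; lra |].
  lra.
have HMd : INR M <= INR d by apply: le_INR; lia.
rewrite Rmax_right // (_ : 2 * INR d - INR d = INR d); last ring.
have Hq : 0 <= g / INR d by apply: Rcomplements.Rdiv_le_0_compat; lra.
have Hc : 0 <= 2 * INR M / (INR d * INR d) by apply: Rcomplements.Rdiv_le_0_compat; nra.
rewrite (_ : INR M * (g * (2 / (INR d * INR d))) = 2 * INR M / (INR d * INR d) * g);
  last by field; lra.
rewrite (_ : W * (2 * INR M / INR d ^ 3) = 2 * INR M / (INR d * INR d) * (W / INR d));
  last by field; lra.
have := Rmult_le_compat_l _ _ _ Hc Hgw; lra.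
Qed.

Lemma lsum_sqfree_mult_le L M K : allprime L -> (1 <= M)%N ->
  INR M * lsum (sqfree_terms L) (fun x => fst x * lsum (List.seq 0 (S K)) (inv_sq_mult M (snd x)))
  <= lsum (sqfree_terms L) (fun x => fst x / INR (snd x))
     + lprod L wfac * lsum (List.map snd (sqfree_terms L)) (phi M).
Proof.
move=> HL HM; have HMr : 0 < INR M by apply/lt_0_INR/leP.
rewrite lsum_map lsum_scal lsum_scal -lsum_plus; apply: lsum_le => x Hx.
have [Hg Hd] := sqfree_terms_pos L HL x Hx.
have := lsum_inv_sq_mult_le (snd x) M K Hd HM => Hmult.
apply: (Rle_trans _ (INR M * (fst x * mult_bound (snd x) (Rmax (INR M) (INR (snd x)))))).
  by apply: Rmult_le_compat_l; [lra | apply: Rmult_le_compat_l].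
exact: weighted_mult_bound_le (sqfree_terms_weight L HL x Hx).
Qed.

Lemma natprod_gt0 L : allprime L -> (0 < natprod L)%N.
Proof.
elim: L => [|p L IH] //= /allprime_cons [Hp HL].
by rewrite muln_gt0 prime_gt0 // IH.
Qed.

Lemma lsum_phi_sqfree_le L M : allprime L -> NoDup L -> (1 <= M)%coq_nat ->
  lsum (List.map snd (sqfree_terms L)) (phi M) <= (harmonic M + 2) / INR M.
Proof.
move=> HL HND HM; apply: (Rle_trans _ (lsum (List.seq 1 (natprod L)) (phi M))); last first.
  exact: lsum_phi_le.
apply: lsum_NoDup_le; first exact: sqfree_terms_nodup.
  move=> d /List.in_map_iff [x [<- Hx]].
  have [_ Hd] := sqfree_terms_pos L HL x Hx.
  have := dvdn_leq (natprod_gt0 L HL) (sqfree_terms_dvd L x Hx); lia.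
by move=> d Hd; apply: phi_nonneg.
Qed.

(* [A7 * prod_{p <= 7} p g(p) = 779/2016 * 44100/3895 = 35/8]. *)
Lemma Btail_bound M K : (1 <= M)%N ->
  INR M * Btail M K <= 7 / 6 + 35 / 8 * ((harmonic M + 2) / INR M).
Proof.
move=> HM; set L := primes_upto (K + 7).
have HAL : allprime L := allprime_primes_upto (K + 7).
have HMr : 0 < INR M by apply/lt_0_INR/leP.
have HA7 := A7_pos.
have := Btail_le_sqfree M K HM; rewrite -/L => H1.
have := lsum_sqfree_mult_le L M K HAL HM.
rewrite sqfree_terms_euler // lprod_wfac => H2.
have := A7_lprod_euler_le K; rewrite -/L => HE.
have := lsum_phi_sqfree_le L M HAL (NoDup_primes_upto _) ltac:(lia) => H3.
set S := lsum (sqfree_terms L) _ in H1 H2.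
set Phi := lsum (List.map snd _) _ in H2 H3.
have : INR M * Btail M K <= A7 * (INR M * S) by nra.
rewrite A7E in HE * => HB.
have : 779 / 2016 * (44100 / 3895 * Phi) <= 35 / 8 * ((harmonic M + 2) / INR M).
  rewrite (_ : 779 / 2016 * (44100 / 3895 * Phi) = 35 / 8 * Phi); last field.
  by apply: Rmult_le_compat_l; lra.
nra.
Qed.

(** * Exact computation for [M < 1000] *)

Definition M0 : nat := 1000.

Open Scope Q_scope.

Definition natQ (n : nat) : Q := inject_Z (Z.of_nat n).
Definition bfacQ (p : nat) : Q :=
  if (p <= 7)%N then (natQ p * natQ p - 1) / (natQ p * natQ p - natQ p - 1) else 1 + / natQ p.
Definition BcoefQ (t : nat) : Q :=
  (779 # 2016) * fold_right (fun p acc => bfacQ p * acc) 1 (primes t).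
Definition termQ (t : nat) : Q := BcoefQ t / (natQ t * natQ t).
Definition harmonicQ (n : nat) : Q := fold_right (fun d acc => / natQ d + acc) 0 (List.seq 1 n).
Definition large_M_boundQ : Q := (7 # 6) + (35 # 8) * ((harmonicQ M0 + 2) / natQ M0).

(* Rounding up to the denominator [10^15] keeps the running sums below of bounded size. *)
Definition roundQ (q : Q) : Q :=
  Qmake (- ((- (Qnum q * 1000000000000000)) / Zpos (Qden q)))%Z 1000000000000000.

(* Runs [M] down over [n] values, [acc] being an upper bound for the exact tail
   [sum_{M < t < M0} B(t)/t^2]; [1209/1000] bounds [M0] times the tail beyond [M0]. *)
Fixpoint check_tails (n M : nat) (acc : Q) : bool :=
  match n with
  | O => true
  | S n' => let acc' := roundQ (acc + termQ M) in
            Qle_bool (natQ M * (acc' + (1209 # 1000) / natQ M0)) (5 # 4)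
            && check_tails n' (M - 1) acc'
  end.

Close Scope Q_scope.

Lemma large_M_boundQ_ok : Qle_bool large_M_boundQ (1209 # 1000) = true.
Proof. by vm_compute. Qed.

Lemma check_tails_ok : check_tails (M0 - 7) (M0 - 1) 0%Q = true.
Proof. by vm_compute. Qed.

Lemma Q2R_Qmake (n : Z) (d : positive) : Q2R (n # d) = IZR n / IZR (Zpos d).
Proof. by []. Qed.

Lemma natQ_R n : Q2R (natQ n) = INR n.
Proof. by rewrite /natQ /Q2R /= Rinv_1 Rmult_1_r INR_IZR_INZ. Qed.

Lemma natQ_neq0 n : (1 <= n)%coq_nat -> ~ (natQ n == 0)%Q.
Proof.
move=> Hn /Qeq_eqR; rewrite natQ_R RMicromega.Q2R_0.
have : 0 < INR n by apply: lt_0_INR; lia.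
lra.
Qed.

Lemma bfacQ_R p : Q2R (bfacQ p) = bfac p.
Proof.
rewrite /bfacQ /bfac; case: (leqP p 7) => Hp; last first.
  by rewrite Q2R_plus Q2R_inv ?natQ_R ?RMicromega.Q2R_1 //; apply: natQ_neq0; lia.
have Hden : INR p * INR p - INR p - 1 <> 0.
  case: p Hp => [|[|p]] Hp; rewrite ?S_INR /=; [lra | lra |].
  by have := pos_INR p; nra.
rewrite Q2R_div; last first.
  by move=> /Qeq_eqR; rewrite RMicromega.Q2R_0 !Q2R_minus Q2R_mult natQ_R RMicromega.Q2R_1.
by rewrite !Q2R_minus Q2R_mult natQ_R RMicromega.Q2R_1 /rfac /= !Rmult_1_r.
Qed.

Lemma BcoefQ_R t : Q2R (BcoefQ t) = Bcoef t.
Proof.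
rewrite /BcoefQ /Bcoef Q2R_mult A7E Q2R_Qmake; congr (_ * _).
by elim: (primes t) => [|p l IH] /=; rewrite ?RMicromega.Q2R_1 // Q2R_mult IH bfacQ_R.
Qed.

Lemma termQ_R t : (1 <= t)%coq_nat -> Q2R (termQ t) = Bcoef t / INR t ^ 2.
Proof.
move=> Ht; have Ht' : 0 < INR t by apply: lt_0_INR.
rewrite /termQ Q2R_div; last first.
  by move=> /Qeq_eqR; rewrite Q2R_mult natQ_R RMicromega.Q2R_0; nra.
by rewrite BcoefQ_R Q2R_mult natQ_R /= Rmult_1_r.
Qed.

Lemma roundQ_ge q : Q2R q <= Q2R (roundQ q).
Proof.
apply: Qle_Rle; rewrite /Qle /roundQ /=.
have := Z.div_mod (- (Qnum q * 1000000000000000)) (Zpos (Qden q)) ltac:(lia).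
have := Z.mod_pos_bound (- (Qnum q * 1000000000000000)) (Zpos (Qden q)) ltac:(lia).
nia.
Qed.

Lemma harmonicQ_R n : Q2R (harmonicQ n) = harmonic n.
Proof.
rewrite /harmonicQ /harmonic.
suff : forall a, (1 <= a)%coq_nat ->
  Q2R (fold_right (fun d acc => / natQ d + acc)%Q 0%Q (List.seq a n))
  = lsum (List.seq a n) (fun d => / INR d) by apply.
elim: n => [|n IH] a Ha /=; first exact: RMicromega.Q2R_0.
by rewrite Q2R_plus Q2R_inv ?natQ_R ?IH //; [lia | apply: natQ_neq0].
Qed.

Definition Btail_fin (m : nat) : R :=
  lsum (List.seq 0 M0) (fun t => if (m <= t)%N then Bcoef t / INR t ^ 2 else 0).

Lemma lsum_seq_single n m (g : nat -> R) : (m < n)%coq_nat ->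
  lsum (List.seq 0 n) (fun t => if Nat.eqb t m then g t else 0) = g m.
Proof.
elim: n => [|n IH] Hm; first lia.
rewrite (List.seq_S n 0) lsum_app lsum_cons lsum_nil /=.
have [->|Hne] := Nat.eq_dec m n.
  rewrite Nat.eqb_refl (lsum_ext _ _ (fun _ => 0)) ?lsum_zero; first lra.
  by move=> t /List.in_seq Ht; rewrite (_ : Nat.eqb t n = false) //; apply/Nat.eqb_neq; lia.
rewrite IH; last lia.
rewrite (_ : Nat.eqb n m = false); first lra.
by apply/Nat.eqb_neq; lia.
Qed.

Lemma Btail_fin_step m : (m < M0)%N -> Btail_fin m = Bcoef m / INR m ^ 2 + Btail_fin (m + 1).
Proof.
move=> Hm; rewrite /Btail_fin -(lsum_seq_single M0 m (fun t => Bcoef t / INR t ^ 2)); last lia.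
rewrite -lsum_plus; apply: lsum_ext => t _.
case: (Nat.eqb_spec t m) => [->|Hne].
  by rewrite leqnn (_ : (m + 1 <= m)%N = false); [ring | lia].
case: (leqP m t) => Hmt; last by rewrite (_ : (m + 1 <= t)%N = false); [ring | lia].
by rewrite (_ : (m + 1 <= t)%N); [ring | lia].
Qed.

Lemma Bcoef_nonneg t : 0 <= Bcoef t.
Proof.
apply: Rmult_le_pos; first by have := A7_pos; lra.
by apply: lprod_nonneg => p /In_primes_prime/prime_ge2/bfac_ge1; lra.
Qed.

Lemma check_tails_correct n M acc : check_tails n M acc = true ->
  Btail_fin (M + 1) <= Q2R acc -> (M < M0)%N -> (n <= M)%N ->
  forall M', (M - n < M')%N -> (M' <= M)%N ->
  INR M' * (Btail_fin M' + 1209 / 1000 / INR M0) <= 5 / 4.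
Proof.
elim: n M acc => [|n IH] M acc; first by move=> *; lia.
rewrite [check_tails _ _ _]/=; set acc' := roundQ (acc + termQ M).
move=> /andP [Hq Hc] HF HM Hn M' H1 H2.
have HFM : Btail_fin M <= Q2R acc'.
  rewrite Btail_fin_step //; apply: (Rle_trans _ (Q2R (acc + termQ M))); last exact: roundQ_ge.
  by rewrite Q2R_plus termQ_R; [lra | lia].
have [->|Hne] := Nat.eq_dec M' M; last first.
  by apply: (IH (M - 1)%N acc') => //; try lia; rewrite (_ : (M - 1 + 1 = M)%N) //; lia.
move/RMicromega.Qle_true: Hq.
rewrite Q2R_mult Q2R_plus Q2R_div; last by apply: natQ_neq0; rewrite /M0; lia.
rewrite !natQ_R (Q2R_Qmake 1209) (Q2R_Qmake 5); have := pos_INR M; nra.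
Qed.

Lemma Btail_fin_small M : (7 <= M)%N -> (M < M0)%N ->
  INR M * (Btail_fin M + 1209 / 1000 / INR M0) <= 5 / 4.
Proof.
move=> H1 H2; apply: (check_tails_correct (M0 - 7) (M0 - 1) 0%Q check_tails_ok);
  rewrite /M0 in H2 *; try lia.
rewrite RMicromega.Q2R_0 (_ : (1000 - 1 + 1 = M0)%N) // /Btail_fin.
rewrite (lsum_ext _ _ (fun _ => 0)) ?lsum_zero; first lra.
by move=> t /List.in_seq Ht; rewrite (_ : (M0 <= t)%N = false) //; rewrite /M0 in Ht *; lia.
Qed.

Lemma large_M_bound : 7 / 6 + 35 / 8 * ((harmonic M0 + 2) / INR M0) <= 1209 / 1000.
Proof.
move/RMicromega.Qle_true: large_M_boundQ_ok; rewrite /large_M_boundQ.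
rewrite Q2R_plus Q2R_mult Q2R_div; last by apply: natQ_neq0; rewrite /M0; lia.
rewrite Q2R_plus natQ_R harmonicQ_R !Q2R_Qmake; lra.
Qed.

Lemma lsum_seq_prefix (g : nat -> R) n m : (forall t, 0 <= g t) ->
  (forall t, (m <= t)%N -> g t = 0) -> lsum (List.seq 0 n) g <= lsum (List.seq 0 m) g.
Proof.
move=> Hg Hz; have [Hnm|Hmn] := le_lt_dec n m.
  by rewrite (_ : m = (n + (m - n))%coq_nat); [apply: lsum_seq_le_add | lia].
rewrite (_ : n = (m + (n - m))%coq_nat); last lia.
rewrite List.seq_app lsum_app (lsum_ext (List.seq (0 + m) _) _ (fun _ => 0)) ?lsum_zero; first lra.
by move=> t /List.in_seq Ht; apply: Hz; lia.
Qed.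

Lemma Btail_split M K : (M <= M0)%N -> Btail M K <= Btail_fin M + Btail M0 K.
Proof.
move=> HM; set f := fun t => Bcoef t / INR t ^ 2.
have Hf : forall t, 0 <= f t.
  case=> [|t]; first by rewrite /f /= Rmult_0_l /Rdiv Rinv_0 Rmult_0_r; lra.
  have := Bcoef_nonneg t.+1; have : 0 < INR t.+1 ^ 2 by apply/pow_lt/lt_0_INR; lia.
  by move=> *; apply: Rcomplements.Rdiv_le_0_compat.
rewrite /Btail (lsum_ext _ _ (fun t => (if (M <= t)%N && (t < M0)%N then f t else 0)
                                      + (if (M0 <= t)%N then f t else 0))); last first.
  move=> t _; case: (leqP M t) => HMt; case: (leqP M0 t) => HM0t;
    rewrite ?andTb ?andFb /f; cbv beta iota; try ring.
  exfalso; lia.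
rewrite lsum_plus; apply: Rplus_le_compat_r; rewrite /Btail_fin.
apply: (Rle_trans _ (lsum (List.seq 0 M0) (fun t => if (M <= t)%N && (t < M0)%N then f t else 0))).
  apply: lsum_seq_prefix => t; first by case: (_ && _); [apply: Hf | lra].
  by move=> Ht; rewrite (_ : (t < M0)%N = false) ?andbF //; lia.
by apply/Req_le/lsum_ext => t /List.in_seq Ht; rewrite (_ : (t < M0)%N) ?andbT //; lia.
Qed.

Lemma Btail_le M K : (7 <= M)%N -> INR M * Btail M K <= 5 / 4.
Proof.
move=> HM7; have Hc := large_M_bound.
have HM0r : 0 < INR M0 by rewrite /M0; apply: lt_0_INR; lia.
case: (leqP M0 M) => HM.
  have := Btail_bound M K ltac:(lia).
  have := harmonic_ratio_anti M0 M ltac:(rewrite /M0; lia) ltac:(lia); lra.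
have HT0 : Btail M0 K <= 1209 / 1000 / INR M0.
  have := Btail_bound M0 K ltac:(rewrite /M0; lia).
  by move=> HB; apply Rcomplements.Rle_div_r; lra.
have := Btail_split M K ltac:(lia); have := pos_INR M.
have := Btail_fin_small M HM7 HM; nra.
Qed.

Lemma sum_n_lsum (f : nat -> R) n : sum_n f n = lsum (List.seq 0 (S n)) f.
Proof.
elim: n => [|n IH]; first by rewrite sum_O /=; lra.
rewrite sum_Sn IH (List.seq_S (S n) 0) lsum_app lsum_cons lsum_nil /plus /=; lra.
Qed.

Lemma sum_n_le_Sn (f : nat -> R) n : 0 <= f (S n) -> sum_n f n <= sum_n f (S n).
Proof. by rewrite sum_Sn /plus /=; lra. Qed.

Lemma sum_n_le_mono (f : nat -> R) m n : (forall k, 0 <= f k) -> (m <= n)%coq_nat ->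
  sum_n f m <= sum_n f n.
Proof.
move=> Hf; elim: n => [|n IH] Hmn; first by rewrite (_ : m = 0%nat); [lra | lia].
have [->|Hne] := Nat.eq_dec m (S n); first lra.
exact: Rle_trans (IH ltac:(lia)) (sum_n_le_Sn _ _ (Hf _)).
Qed.


Lemma sum_n_add_le (f : nat -> R) n m : (forall t, 0 <= f t) -> (n < m)%coq_nat ->
  sum_n f n + f m <= sum_n f m.
Proof.
case: m => [|m] Hf Hnm; first lia.
by rewrite sum_Sn /plus /=; have := sum_n_le_mono f n m Hf ltac:(lia); lra.
Qed.

Lemma Series_sub_sum_n (f : nat -> R) N c t0 : (forall t, 0 <= f t) ->
  (forall K, sum_n f K - sum_n f N <= c) -> (N < t0)%coq_nat -> 0 < f t0 ->
  0 < Series f - sum_n f N <= c.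
Proof.
move=> Hf Hc Ht0 Hpos; set s := sum_n f.
have Hincr : forall n, s n <= s (S n) by move=> n; apply: sum_n_le_Sn.
have Hbd : forall K, s K <= s N + c by move=> K; have := Hc K; rewrite -/s; lra.
have [l Hl] : ex_finite_lim_seq s by exact: (ex_finite_lim_seq_incr _ (s N + c)).
rewrite /Series -/s (is_lim_seq_unique _ _ Hl) /=; split.
  have := is_lim_seq_incr_compare _ _ Hl Hincr t0.
  have := sum_n_add_le f N t0 Hf Ht0; rewrite -/s; lra.
have := is_lim_seq_le s (fun _ => s N + c) l (s N + c) Hbd Hl (is_lim_seq_const _).
move=> /= H; lra.
Qed.

Lemma r_pos t : (1 <= t)%coq_nat -> 0 < r t.
Proof.
move=> Ht; rewrite rE; apply: Rmult_lt_0_compat.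
  by apply/Rinv_0_lt_compat/pow_lt/lt_0_INR; lia.
by apply: lprod_pos => p /In_primes_prime/prime_ge2/rfac_pos.
Qed.

Lemma rterm_nonneg a d t : 0 <= rterm a d t.
Proof.
rewrite /rterm; case E: (Nat.leb 1 t && congb t a d); last lra.
by move/andP: E => [/Nat.leb_le Ht _]; apply/Rlt_le/r_pos.
Qed.

Lemma rterm_le_r a d t : (1 <= t)%coq_nat -> rterm a d t <= r t.
Proof. by move=> Ht; have := r_pos t Ht; rewrite /rterm; case: (_ && _); lra. Qed.

Lemma rterm_pos_beyond a d N : (1 <= d)%coq_nat ->
  exists t0, (N < t0)%coq_nat /\ 0 < rterm a d t0.
Proof.
move=> Hd; set u := ((a - Z.of_nat (N + 1)) mod Z.of_nat d)%Z.
have Hu := Z.mod_pos_bound (a - Z.of_nat (N + 1)) (Z.of_nat d) ltac:(lia).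
have Hdm := Z.div_mod (a - Z.of_nat (N + 1)) (Z.of_nat d) ltac:(lia).
set q := ((a - Z.of_nat (N + 1)) / Z.of_nat d)%Z in Hdm.
exists (N + 1 + Z.to_nat u)%coq_nat; split; first lia.
rewrite /rterm (_ : Nat.leb 1 _ = true); last by apply/Nat.leb_le; lia.
rewrite (_ : congb _ a d = true); first by apply: r_pos; lia.
apply/Z.eqb_eq; rewrite (_ : (_ - a = - q * Z.of_nat d)%Z); first exact: Z_mod_mult.
by rewrite -/u in Hu Hdm; lia.
Qed.

Lemma lsum_seq_head (g : nat -> R) N K : (N <= K)%coq_nat ->
  lsum (List.seq 0 (S K)) (fun t => if (t <= N)%N then g t else 0) = lsum (List.seq 0 (S N)) g.
Proof.
move=> HNK; rewrite (_ : S K = (S N + (K - N))%coq_nat); last lia.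
rewrite List.seq_app lsum_app (lsum_ext (List.seq (0 + S N) (K - N)) _ (fun _ => 0)).
  rewrite lsum_zero Rplus_0_r; apply: lsum_ext => t /List.in_seq Ht.
  by rewrite (_ : (t <= N)%N) //; lia.
by move=> t /List.in_seq Ht; rewrite (_ : (t <= N)%N = false) //; lia.
Qed.

Lemma A_sum_n_rterm_sub_le a d N K : (6 <= N)%coq_nat ->
  A * (sum_n (rterm a d) K - sum_n (rterm a d) N) <= 5 / 4 / INR (N + 1).
Proof.
move=> HN; have HA := A_ge; have HM : 0 < INR (N + 1) by apply: lt_0_INR; lia.
have Hb : 0 <= 5 / 4 / INR (N + 1) by apply: Rcomplements.Rdiv_le_0_compat; lra.
have [HK|HK] := le_lt_dec N K; last first.
  have := sum_n_le_mono (rterm a d) K N (rterm_nonneg a d) ltac:(lia); nra.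
rewrite !sum_n_lsum (lsum_ext (List.seq 0 (S K)) (rterm a d)
  (fun t => (if (t <= N)%N then rterm a d t else 0)
            + (if (N + 1 <= t)%N then rterm a d t else 0))); last first.
  move=> t _; case: (leqP t N) => Ht.
    by rewrite (_ : (N + 1 <= t)%N = false); [ring | lia].
  by rewrite (_ : (N + 1 <= t)%N); [ring | lia].
rewrite lsum_plus lsum_seq_head //.
set X := lsum (List.seq 0 (S K)) _.
have HX : A * X <= Btail (N + 1) K.
  rewrite /Btail lsum_scal; apply: lsum_le => t _; case E: (N + 1 <= t)%N; cbv beta iota; last lra.
  have Ht : (1 <= t)%N by lia.
  have := A_r_le_Bcoef t Ht; have := rterm_le_r a d t ltac:(lia).
  move=> *; apply: (Rle_trans _ (A * r t)); [apply: Rmult_le_compat_l | ]; lra.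
have HT := Btail_le (N + 1) K ltac:(lia).
set P := lsum (List.seq 0 (S N)) (rterm a d).
rewrite (_ : A * (P + X - P) = A * X); last ring.
apply (Rcomplements.Rle_div_r (A * X) (5 / 4) (INR (N + 1))); nra.
Qed.

Theorem mainTheorem17 (a : Z) (d : nat) (x : R) :
  (1 <= d)%coq_nat -> 6 <= x ->
  0 < rho a d - A * sum_n (rterm a d) (Z.to_nat (Int_part x)) /\
  rho a d - A * sum_n (rterm a d) (Z.to_nat (Int_part x)) < (128 / 100) / x.
Proof.
move=> Hd Hx; have [Hfl1 Hfl2] := base_Int_part x.
have HI6 : (6 <= Int_part x)%Z.
  have : (5 < Int_part x)%Z by apply: lt_IZR; lra.
  lia.
set N := Z.to_nat (Int_part x).
have HN6 : (6 <= N)%coq_nat by rewrite /N; lia.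
have HxN : x < INR (N + 1).
  by rewrite plus_INR /N INR_IZR_INZ Z2Nat.id /=; [lra | lia].
have HA := A_ge; set c := 5 / 4 / INR (N + 1) / A.
have Htail : forall K, sum_n (rterm a d) K - sum_n (rterm a d) N <= c.
  move=> K; have := A_sum_n_rterm_sub_le a d N K HN6.
  by rewrite /c => H; apply Rcomplements.Rle_div_r; nra.
have [t0 [Ht0 Hpos]] := rterm_pos_beyond a d N Hd.
have [Hlo Hup] := Series_sub_sum_n _ _ _ _ (rterm_nonneg a d) Htail Ht0 Hpos.
rewrite /rho -Rmult_minus_distr_l; split; first nra.
have : A * c = 5 / 4 / INR (N + 1) by rewrite /c; field; lra.
have : 5 / 4 / INR (N + 1) < 128 / 100 / x.
  rewrite /Rdiv; apply: (Rle_lt_trans _ (5 / 4 * / x)).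
    by apply: Rmult_le_compat_l; [lra | apply: Rinv_le_contravar; lra].
  by apply: Rmult_lt_compat_r; [apply: Rinv_0_lt_compat |]; lra.
nra.
Qed.
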